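(* Let $X$ be a simple abelian variety over $\mathbb{C}$ and let $n \ge 2$ be an integer. Let $F$ be an automorphism of the abelian variety $X^n$ (a group automorphism, i.e. preserving $0$). Then $F$ satisfies the symmetric condition if and only if \[ F = \sigma \circ \begin{pmatrix} f & g & \cdots & g \\ g & f & \ddots & \vdots \\ \vdots & \ddots & \ddots & g \\ g & \cdots & g & f \end{pmatrix} \] for some permutation $\sigma \in \mathfrak{S}_n$ (acting on $X^n$ by permuting the factors, i.e. as a permutation matrix) and some $f, g \in \operatorname{End}(X)$, where the matrix has $f$ on the diagonal and $g$ in every off-diagonal entry.
   Context: All work is over $\mathbb{C}$. Automorphisms and endomorphisms of abelian varieties are taken to be group homomorphisms (preserving $0$); $\operatorname{End}(X)$ is the endomorphism ring of $X$. An abelian variety is simple if it has no nontrivial abelian subvariety. Every endomorphism $F$ of $X^n$ is written as a matrix $(f_{ij})$ with $f_{ij} \in \operatorname{End}(X)$, where $F(x_1,\dots,x_n)_i = \sum_j f_{ij}(x_j)$. The symmetric product $X^{(n)}$ is the quotient of $X^n$ by the permutation action of the symmetric group $\mathfrak{S}_n$, and $\rho\colon X^n \to X^{(n)}$ is the quotient map. An automorphism $F$ of $X^n$ satisfies the symmetric condition if there exists an automorphism $\tau$ of $X^{(n)}$ with $\tau \circ \rho = \rho \circ F$. *)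

From HB Require Import structures.
From mathcomp Require Import all_boot all_order all_algebra all_fingroup.
From mathcomp Require Import reals.
From mathcomp Require Import complex.
Set Implicit Arguments. Unset Strict Implicit. Unset Printing Implicit Defensive.
Import Order.TTheory GRing.Theory Num.Theory.
Local Open Scope ring_scope.

(* A complex torus  X = C^g / Lambda  is given by a period matrix            *)
(*   Pi : 'M[R[i]]_(g, g + g)   (columns = a Z-basis of Lambda).             *)
(* Points of X are represented by column vectors of C^g, taken modulo Lambda.*)

Section Torus.
Variables (R : realType) (g : nat).
Local Notation C := (R[i]).

Definition realify k (A : 'M[C]_(g, k)) : 'M[R]_(g + g, k) :=
  col_mx (map_mx (@complex.Re R) A) (map_mx (@complex.Im R) A).

(* the columns of Pi are R-linearly independent: Lambda is a lattice *)
Definition is_lattice (Pi : 'M[C]_(g, g + g)) : Prop :=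
  realify Pi \in unitmx.

Definition intC m k (M : 'M[int]_(m, k)) : 'M[C]_(m, k) := map_mx intr M.
Definition intR m k (M : 'M[int]_(m, k)) : 'M[R]_(m, k) := map_mx intr M.

Definition torus_eq (Pi : 'M[C]_(g, g + g)) (x y : 'cV[C]_g) : Prop :=
  exists m : 'cV[int]_(g + g), x - y = Pi *m intC m.

(* End(X): group endomorphisms of the complex torus X are exactly the maps  *)
(* induced by C-linear maps A of C^g with A(Lambda) \subset Lambda.         *)
Definition is_endo (Pi : 'M[C]_(g, g + g)) (A : 'M[C]_g) : Prop :=
  exists M : 'M[int]_(g + g), A *m Pi = Pi *m intC M.

(* Lattice coordinates of a point u of C^g (well defined when Pi is a       *)
(* lattice): the real vector c with realify u = realify Pi * c.             *)
Definition lat_coord (Pi : 'M[C]_(g, g + g)) (u : 'cV[C]_g) : 'cV[R]_(g + g) :=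
  invmx (realify Pi) *m realify u.

(* the R-bilinear form on C^g extending an integer form E on Lambda *)
Definition ext_form (Pi : 'M[C]_(g, g + g)) (E : 'M[int]_(g + g))
  (u v : 'cV[C]_g) : R :=
  ((lat_coord Pi u)^T *m intR E *m lat_coord Pi v) ord0 ord0.

Definition iC : C := Complex 0 1.

(* Riemann conditions: X admits a polarization, i.e. an alternating integral *)
(* form E on Lambda with E(iu,iv) = E(u,v) and E(iu,u) > 0 for u <> 0        *)
(* (equivalently H(u,v) = E(iu,v) + i E(u,v) is a positive definite          *)
(* hermitian form whose imaginary part is integral on Lambda).              *)
Definition polarizable (Pi : 'M[C]_(g, g + g)) : Prop :=
  exists E : 'M[int]_(g + g),
    E^T = - E /\
    (forall u v : 'cV[C]_g, ext_form Pi E (iC *: u) (iC *: v) = ext_form Pi E u v) /\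
    (forall u : 'cV[C]_g, u != 0 -> 0 < ext_form Pi E (iC *: u) u).

Definition abelian_variety (Pi : 'M[C]_(g, g + g)) : Prop :=
  is_lattice Pi /\ polarizable Pi.

(* An abelian subvariety (= complex subtorus) of X corresponds to a sublattice *)
(* spanned by Q-independent integer vectors (columns of N, in lattice          *)
(* coordinates) whose real span V (spanned by the columns of Pi N) is a        *)
(* complex subspace, i.e. i V \subset V.  It is 0 iff k = 0 and all of X iff   *)
(* k = 2g.  X is simple iff it is nonzero and has no other subtori.            *)
Definition subtorus_lattice k (Pi : 'M[C]_(g, g + g)) (N : 'M[int]_(g + g, k)) : Prop :=
  \rank (intR N) = k /\
  exists T : 'M[R]_k, iC *: (Pi *m intC N) = (Pi *m intC N) *m map_mx (fun r : R => Complex r 0) T.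

Definition simple_torus (Pi : 'M[C]_(g, g + g)) : Prop :=
  (0 < g)%N /\
  forall k (N : 'M[int]_(g + g, k)), subtorus_lattice Pi N ->
    k = 0%N \/ k = (g + g)%N.

Definition simple_abelian_variety (Pi : 'M[C]_(g, g + g)) : Prop :=
  abelian_variety Pi /\ simple_torus Pi.

(* X^n.  Points: families x : 'I_n -> C^g.  Endomorphisms: matrices         *)
(* F : 'I_n -> 'I_n -> End(X), acting by (F x)_i = sum_j F i j (x j).        *)
Variable n : nat.

Definition pow_eq (Pi : 'M[C]_(g, g + g)) (x y : 'I_n -> 'cV[C]_g) : Prop :=
  forall i, torus_eq Pi (x i) (y i).

Definition is_endo_pow (Pi : 'M[C]_(g, g + g)) (F : 'I_n -> 'I_n -> 'M[C]_g) : Prop :=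
  forall i j, is_endo Pi (F i j).

Definition apply_pow (F : 'I_n -> 'I_n -> 'M[C]_g) (x : 'I_n -> 'cV[C]_g) :
  'I_n -> 'cV[C]_g := fun i => \sum_j F i j *m x j.

Definition comp_pow (F G : 'I_n -> 'I_n -> 'M[C]_g) : 'I_n -> 'I_n -> 'M[C]_g :=
  fun i j => \sum_k F i k *m G k j.

Definition id_pow : 'I_n -> 'I_n -> 'M[C]_g :=
  fun i j => if i == j then 1%:M else 0.

Definition is_auto_pow (Pi : 'M[C]_(g, g + g)) (F : 'I_n -> 'I_n -> 'M[C]_g) : Prop :=
  is_endo_pow Pi F /\
  exists G, is_endo_pow Pi G /\ comp_pow F G = id_pow /\ comp_pow G F = id_pow.

(* The symmetric product X^(n) = X^n / S_n: two points of X^n have the same *)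
(* image under rho iff they differ (mod Lambda) by a permutation of factors. *)
Definition sym_rel (Pi : 'M[C]_(g, g + g)) (x y : 'I_n -> 'cV[C]_g) : Prop :=
  exists s : 'S_n, pow_eq Pi (fun i => x (s i)) y.

(* points of X^(n), as the S_n-orbits (equivalence classes of sym_rel) *)
Definition sym_point (Pi : 'M[C]_(g, g + g)) (S : ('I_n -> 'cV[C]_g) -> Prop) : Prop :=
  exists x, S = sym_rel Pi x.

Definition SymProd (Pi : 'M[C]_(g, g + g)) := {S | sym_point Pi S}.

Definition rho (Pi : 'M[C]_(g, g + g)) (x : 'I_n -> 'cV[C]_g) : SymProd Pi :=
  exist _ (sym_rel Pi x) (ex_intro _ x erefl).

Definition symmetric_condition (Pi : 'M[C]_(g, g + g))
  (F : 'I_n -> 'I_n -> 'M[C]_g) : Prop :=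
  exists tau : SymProd Pi -> SymProd Pi,
    bijective tau /\ forall x, tau (rho Pi x) = rho Pi (apply_pow F x).

End Torus.

(* Fix a permutation p.  For every point x some q makes x |-> F(x o p) - (F x) o q
   lattice valued; rescaling x and using the discreteness of the lattice makes it
   vanish, and since a vector space is not a finite union of proper subspaces a
   single q works for all x: F P_p = P_q F as matrices over End(X).  Conversely,
   an automorphism with this equivariance for every p induces a bijection of
   X^(n).  Taking traces in P_q = F P_p F^-1, q and p have the same number of
   fixed points, so each transposition (a0 b) is matched with a transposition
   (x_b y_b).  Invertibility of F forces any two of these pairs to meet, hence
   all of them share one point r; the inverse of a0 |-> r, b |-> the other
   point of the pair of b, is the permutation s of the stated form. *)

From HB Require Import structures.
From mathcomp Require Import all_boot all_order all_algebra all_fingroup.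
From mathcomp Require Import reals.
From mathcomp Require Import complex.
From Stdlib Require Import Classical ClassicalEpsilon ProofIrrelevance.
From Stdlib Require Import FunctionalExtensionality PropExtensionality.
Set Implicit Arguments. Unset Strict Implicit. Unset Printing Implicit Defensive.
Import Order.TTheory GRing.Theory Num.Theory.
Local Open Scope ring_scope.

Definition finitely_divisible (V : zmodType) (P : V -> Prop) :=
  forall w : V, exists B : nat,
    forall (N : nat) (v : V), (B < N)%N -> P v -> w = v *+ N -> w = 0.

Lemma finitely_divisible_ffun (I : finType) (V : zmodType) (P : V -> Prop) :
  finitely_divisible P -> finitely_divisible (fun w : {ffun I -> V} => forall i, P (w i)).
Proof.
move=> divP w; have [B hB] := fin_all_exists (fun i => divP (w i)).
exists (\max_i B i) => N v hN hv ew; apply/ffunP => i; rewrite ffunE.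
apply: (hB i N (v i)) => //; first exact: leq_ltn_trans (leq_bigmax i) hN.
by rewrite ew ffunMnE.
Qed.

Section KernelCover.
Variables (K : numFieldType) (U W : lmodType K) (S : finType) (L : S -> {linear U -> W}).

Lemma cover_by_kernels_of_finitely_divisible (P : W -> Prop) :
  finitely_divisible P -> (forall u, exists s, P (L s u)) ->
  forall u, exists s, L s u = 0.
Proof.
move=> divP cover u; have [B hB] := fin_all_exists (fun s => divP (L s u)).
pose N := (\max_s B s).+1; have [s hs] := cover (N%:R^-1 *: u); exists s.
apply: (hB s N _ _ hs); first by rewrite ltnS leq_bigmax.
by rewrite linearZ -scaler_nat scalerA mulfV ?scale1r // pnatr_eq0.
Qed.

Lemma kernel_of_line (A : {set S}) x y :
  (forall t : 'I_#|A|.+1, exists2 s, s \in A & L s (t%:R *: y + x) = 0) ->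
  exists2 s, s \in A & L s x = 0 /\ L s y = 0.
Proof.
move=> /fin_all_exists2[f fA hf].
have /injectivePn[t1 [t2 t12 ft12]] : ~~ injectiveb f.
  apply/injectiveP => f_inj.
  have : (#|f @: [set: 'I_#|A|.+1]| <= #|A|)%N.
    by apply/subset_leq_card/subsetP => _ /imsetP[t _ ->].
  by rewrite card_imset // cardsT card_ord ltnn.
have Ly : L (f t1) y = 0.
  have := hf t2; rewrite -ft12 !linearP => h2; have := hf t1; rewrite !linearP => h1.
  have : (t1%:R - t2%:R : K) *: L (f t1) y = 0.
    by rewrite scalerBl -(addrKA (L (f t1) x)) ![L (f t1) x + _]addrC h1 h2 subrr.
  move/eqP; rewrite scaler_eq0 subr_eq0 eqr_nat => /orP[/eqP/val_inj t12' | /eqP //].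
  by rewrite t12' eqxx in t12.
exists (f t1); first exact: fA.
by split=> //; have := hf t1; rewrite linearP Ly scaler0 add0r.
Qed.

Lemma cover_by_kernels :
  (forall u, exists s, L s u = 0) -> exists s, forall u, L s u = 0.
Proof.
suff cover_set k (A : {set S}) : (#|A| <= k)%N ->
    (forall u, exists2 s, s \in A & L s u = 0) ->
    exists2 s, s \in A & forall u, L s u = 0.
  move=> cover; have [|s _ hs] := cover_set _ _ (leqnn #|[set: S]|); last by exists s.
  by move=> u; have [s hs] := cover u; exists s; rewrite ?inE.
elim: k A => [|k IH] A hA cover; have [s0 s0A _] := cover 0.
  by move: hA; rewrite leqn0 => /eqP/cards0_eq A0; rewrite A0 inE in s0A.
have [|/not_all_ex_not[y /eqP ys0]] := classic (forall u, L s0 u = 0); first by exists s0.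
have [||s] := IH (A :\ s0).
- by rewrite (cardsD1 s0) s0A in hA.
- move=> x; have [|s sA [sx sy]] := @kernel_of_line A x y; first by move=> t; apply: cover.
  by exists s; rewrite // !inE sA andbT; apply: contra_neq ys0 => <-.
- by rewrite inE => /andP[_ sA]; exists s.
Qed.

End KernelCover.

Section Lattice.
Variables (R : realType) (g : nat) (Pi : 'M[R[i]]_(g, g + g)).

Definition lattice_point (v : 'cV[R[i]]_g) :=
  exists m : 'cV[int]_(g + g), v = Pi *m intC R m.

Lemma torus_eqP a b : torus_eq Pi a b <-> lattice_point (a - b).
Proof. by []. Qed.

Lemma lattice_point0 : lattice_point 0.
Proof. by exists 0; rewrite /intC map_mx0 mulmx0. Qed.

Lemma lattice_pointB u v : lattice_point u -> lattice_point v -> lattice_point (u - v).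
Proof. by move=> [a ->] [b ->]; exists (a - b); rewrite /intC map_mxB mulmxBr. Qed.

Lemma lattice_pointN v : lattice_point v -> lattice_point (- v).
Proof. by move=> hv; rewrite -sub0r; apply: lattice_pointB => //; apply: lattice_point0.
Qed.

Lemma lattice_pointD u v : lattice_point u -> lattice_point v -> lattice_point (u + v).
Proof.
by move=> hu hv; rewrite -[v]opprK; apply: lattice_pointB => //; apply: lattice_pointN.
Qed.

Lemma lattice_point_sum (I : finType) (v : I -> 'cV[R[i]]_g) :
  (forall i, lattice_point (v i)) -> lattice_point (\sum_i v i).
Proof.
by move=> hv; apply: big_ind => //; [apply: lattice_point0 | apply: lattice_pointD].
Qed.

Lemma lattice_pointMn v k : lattice_point v -> lattice_point (v *+ k).
Proof. by move=> hv; rewrite -[k]card_ord -sumr_const; apply: lattice_point_sum. Qed.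

Lemma lattice_point_endo A v : is_endo Pi A -> lattice_point v -> lattice_point (A *m v).
Proof.
by move=> [M HM] [m ->]; exists (M *m m); rewrite mulmxA HM -mulmxA /intC map_mxM.
Qed.

Lemma realify_lattice (m : 'cV[int]_(g + g)) :
  realify (Pi *m intC R m) = realify Pi *m intR R m.
Proof.
rewrite /realify mul_col_mx; congr col_mx; apply/matrixP=> i j; rewrite !mxE.
- rewrite (raddf_sum (@complex.Re R : complex.Rcomplex R -> R)).
  apply: eq_bigr => k _; rewrite !mxE -(rmorph_int (@real_complex R)).
  by case: (Pi i k) => a b /=; rewrite mulr0 subr0.
rewrite (raddf_sum (@complex.Im R : complex.Rcomplex R -> R)).
apply: eq_bigr => k _; rewrite !mxE -(rmorph_int (@real_complex R)).
by case: (Pi i k) => a b /=; rewrite mulr0 add0r.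
Qed.

Lemma lattice_coord_inj :
  is_lattice Pi -> injective (fun m : 'cV[int]_(g + g) => Pi *m intC R m).
Proof.
move=> hL m m' /(congr1 (@realify R g 1)).
rewrite !realify_lattice => /(can_inj (mulKmx hL)).
by move/matrixP=> E; apply/matrixP=> i j; move: (E i j); rewrite !mxE => /intr_inj.
Qed.

Lemma lattice_point_finitely_divisible :
  is_lattice Pi -> finitely_divisible lattice_point.
Proof.
move=> hL w; have [[mw ->]|nl] := classic (lattice_point w); last first.
  by exists 0%N => N v _ hv ew; case: nl; rewrite ew; apply: lattice_pointMn.
exists (\max_(k < g + g) `|mw k ord0|%N) => N v hN [m ->] ew.
have {ew} ew : mw = m *+ N.
  apply: (lattice_coord_inj hL); rewrite /= ew -(raddfMn (@mulmx _ _ _ 1 Pi)).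
  by congr (_ *m _); apply/matrixP=> i j; rewrite !(mulmxnE, mxE) rmorphMn.
suff m0 : m = 0 by rewrite ew m0 mul0rn /intC map_mx0 mulmx0.
apply/matrixP=> k j; rewrite (ord1 j) mxE; apply/eqP; apply: contraTT hN => nz.
rewrite -leqNgt (leq_trans _ (leq_bigmax k)) // ew mulmxnE -mulr_natl mulrC abszM natz.
by rewrite -{1}(mul1n N) leq_mul2r absz_gt0 nz orbT.
Qed.

End Lattice.

Section PowerMaps.
Variables (R : realType) (g n : nat).
Local Notation C := R[i].
Local Notation pt := ('I_n -> 'cV[C]_g).
Implicit Types (A B F : 'I_n -> 'I_n -> 'M[C]_g) (x y : pt).

Definition pow_map A (x : {ffun 'I_n -> 'cV[C]_g}) : {ffun 'I_n -> 'cV[C]_g} :=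
  [ffun i => apply_pow A x i].

Lemma pow_map_is_linear A : linear (pow_map A).
Proof.
move=> a x y; apply/ffunP => i; rewrite !ffunE /apply_pow scaler_sumr -big_split.
by apply: eq_bigr => j _; rewrite !ffunE mulmxDr scalemxAr.
Qed.

HB.instance Definition _ A :=
  GRing.isLinear.Build C {ffun 'I_n -> 'cV[C]_g} {ffun 'I_n -> 'cV[C]_g} _ (pow_map A)
    (pow_map_is_linear A).

Lemma apply_powBl A B x i :
  apply_pow (fun i j => A i j - B i j) x i = apply_pow A x i - apply_pow B x i.
Proof. by rewrite /apply_pow -sumrB; apply: eq_bigr => j _; rewrite mulmxBl. Qed.

Lemma apply_powB A x y i :
  apply_pow A (fun j => x j - y j) i = apply_pow A x i - apply_pow A y i.
Proof. by rewrite /apply_pow -sumrB; apply: eq_bigr => j _; rewrite mulmxBr. Qed.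

Lemma apply_pow_perm A (p : 'S_n) x i :
  apply_pow A (fun j => x (p j)) i = apply_pow (fun i j => A i ((p^-1)%g j)) x i.
Proof.
rewrite /apply_pow [RHS](reindex_inj (@perm_inj _ p)).
by apply: eq_bigr => j _; rewrite permK.
Qed.

Lemma apply_pow_comp A B x i :
  apply_pow A (apply_pow B x) i = apply_pow (comp_pow A B) x i.
Proof.
rewrite /apply_pow /comp_pow; under eq_bigr do rewrite mulmx_sumr.
rewrite exchange_big; apply: eq_bigr => j _.
by rewrite mulmx_suml; apply: eq_bigr => k _; rewrite mulmxA.
Qed.

Lemma apply_pow_id x i : apply_pow (@id_pow R g n) x i = x i.
Proof.
rewrite /apply_pow (bigD1 i) //= /id_pow eqxx mul1mx big1 ?addr0 // => j.
by rewrite eq_sym => /negbTE ->; rewrite mul0mx.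
Qed.

Lemma apply_pow_delta A j (e : 'cV[C]_g) i :
  apply_pow A [ffun k => if k == j then e else 0] i = A i j *m e.
Proof.
rewrite /apply_pow (bigD1 j) //= ffunE eqxx big1 ?addr0 // => k.
by rewrite ffunE => /negbTE ->; rewrite mulmx0.
Qed.

Lemma apply_pow_inj A B :
  (forall (x : {ffun 'I_n -> 'cV[C]_g}) i, apply_pow A x i = apply_pow B x i) ->
  forall i j, A i j = B i j.
Proof.
move=> AB i j; apply/matrixP => a b.
have := AB [ffun k => if k == j then delta_mx b 0 else 0] i.
by rewrite !apply_pow_delta => /(congr1 (fun v : 'cV_g => v a 0)); rewrite -!colE !mxE.
Qed.

Variable Pi : 'M[C]_(g, g + g).

Lemma apply_pow_lattice A x i : is_endo_pow Pi A ->
  (forall j, lattice_point Pi (x j)) -> lattice_point Pi (apply_pow A x i).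
Proof. by move=> endoA hx; apply: lattice_point_sum => j; apply: lattice_point_endo. Qed.

End PowerMaps.

Definition intertwines (T : Type) n (F : 'I_n -> 'I_n -> T) (q p : 'S_n) :=
  forall i j, F (q i) (p j) = F i j.

Definition perm_equivariant (T : Type) n (F : 'I_n -> 'I_n -> T) :=
  forall p : 'S_n, exists q : 'S_n, intertwines F q p.

Section Equivariance.
Variables (R : realType) (g n : nat).
Local Notation C := R[i].
Implicit Types (F G : 'I_n -> 'I_n -> 'M[C]_g).

Lemma apply_pow_intertwines F q p x i :
  intertwines F q p -> apply_pow F (fun j => x (p j)) i = apply_pow F x (q i).
Proof.
move=> Fqp; rewrite apply_pow_perm /apply_pow.
by apply: eq_bigr => j _; rewrite -Fqp permKV.
Qed.

Lemma left_inverse_col_inj F G : (0 < g)%N -> comp_pow G F = @id_pow R g n ->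
  forall j j', (forall i, F i j = F i j') -> j = j'.
Proof.
move=> g_gt0 GF j j' Fjj'; apply/eqP; apply: contraT => jj'.
have : comp_pow G F j j = comp_pow G F j j'.
  by rewrite /comp_pow; apply: eq_bigr => k _; rewrite Fjj'.
rewrite GF /id_pow eqxx (negbTE jj') => /matrixP /(_ (Ordinal g_gt0) (Ordinal g_gt0)).
by rewrite !mxE eqxx => /eqP; rewrite oner_eq0.
Qed.

Lemma perm_equivariant_surj F G : (0 < g)%N -> comp_pow G F = @id_pow R g n ->
  perm_equivariant F -> forall q, exists p, intertwines F q p.
Proof.
move=> g_gt0 GF Feq; have [phi phiP] := fin_all_exists Feq.
have phi_inj : injective phi.
  move=> p p' E; apply/permP => j.
  apply: (left_inverse_col_inj g_gt0 GF) => i.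
  have := phiP p' ((phi p)^-1 i)%g j; rewrite -E permKV => ->.
  by rewrite -(phiP p ((phi p)^-1 i)%g) permKV.
have [psi phiK psiK] := injF_bij phi_inj.
by move=> q; exists (psi q); rewrite -{1}(psiK q).
Qed.

End Equivariance.

Section SymmetricProduct.
Variables (R : realType) (g n : nat) (Pi : 'M[R[i]]_(g, g + g)).
Local Notation pt := ('I_n -> 'cV[R[i]]_g).
Implicit Types (x y z : pt) (F G : 'I_n -> 'I_n -> 'M[R[i]]_g).

Lemma sym_rel_refl x : sym_rel Pi x x.
Proof. by exists 1%g => i; apply/torus_eqP; rewrite perm1 subrr; apply: lattice_point0. Qed.

Lemma sym_rel_sym x y : sym_rel Pi x y -> sym_rel Pi y x.
Proof.
move=> [s xy]; exists s^-1%g => i; apply/torus_eqP.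
by have := lattice_pointN (xy (s^-1 i)%g); rewrite permKV opprB.
Qed.

Lemma sym_rel_perm x (p : 'S_n) : sym_rel Pi x (fun j => x (p j)).
Proof. by exists p => i; apply/torus_eqP; rewrite subrr; apply: lattice_point0. Qed.

Lemma sym_rel_trans x y z : sym_rel Pi x y -> sym_rel Pi y z -> sym_rel Pi x z.
Proof.
move=> [s xy] [t yz]; exists (t * s)%g => i; apply/torus_eqP.
by have := lattice_pointD (xy (t i)) (yz i); rewrite permM addrA subrK.
Qed.

Lemma rho_eqP x y : rho Pi x = rho Pi y <-> sym_rel Pi x y.
Proof.
split=> [/(congr1 sval) /= ->|xy]; first exact: sym_rel_refl.
have yx := sym_rel_sym xy.
apply: eq_exist_uncurried; exists (functional_extensionality _ _ (fun z =>
  propositional_extensionality _ _ (conj (sym_rel_trans yx) (sym_rel_trans xy)))).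
exact: proof_irrelevance.
Qed.

Definition sym_repr (S : SymProd n Pi) : pt :=
  proj1_sig (constructive_indefinite_description _ (proj2_sig S)).

Lemma sym_reprK S : rho Pi (sym_repr S) = S.
Proof.
rewrite /sym_repr; case: constructive_indefinite_description => x /= Sx.
case: S Sx => S pS /= Sx; apply: eq_exist_uncurried; exists (esym Sx).
exact: proof_irrelevance.
Qed.

Definition preserves_sym_rel F :=
  forall x y, sym_rel Pi x y -> sym_rel Pi (apply_pow F x) (apply_pow F y).

Definition reflects_sym_rel F :=
  forall x y, sym_rel Pi (apply_pow F x) (apply_pow F y) -> sym_rel Pi x y.

Lemma symmetric_condition_preserves F : symmetric_condition Pi F -> preserves_sym_rel F.
Proof. by move=> [tau [_ tauF]] x y /rho_eqP xy; apply/rho_eqP; rewrite -!tauF xy. Qed.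

Lemma symmetric_condition_of_sym_rel F G :
  preserves_sym_rel F -> reflects_sym_rel F -> comp_pow F G = @id_pow R g n ->
  symmetric_condition Pi F.
Proof.
move=> Fpres Frefl FG.
have FGK y : apply_pow F (apply_pow G y) = y.
  by apply: functional_extensionality => i; rewrite apply_pow_comp FG apply_pow_id.
have repr_rho y : sym_rel Pi (sym_repr (rho Pi y)) y by apply/rho_eqP; rewrite sym_reprK.
pose tau S := rho Pi (apply_pow F (sym_repr S)).
exists tau; split=> [|x]; last by apply/rho_eqP/Fpres/repr_rho.
exists (fun S => rho Pi (apply_pow G (sym_repr S))) => S.
  by rewrite -[RHS]sym_reprK; apply/rho_eqP/Frefl; rewrite FGK; apply: repr_rho.
rewrite /tau -[RHS]sym_reprK; apply/rho_eqP.
by rewrite -{2}(FGK (sym_repr S)); apply/Fpres/repr_rho.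
Qed.

Lemma preserves_sym_rel_equivariant F :
  is_lattice Pi -> preserves_sym_rel F -> perm_equivariant F.
Proof.
move=> hL Fpres p.
pose D (q : 'S_n) i j := F (q i) j - F i (p^-1 j)%g.
have cover (x : {ffun 'I_n -> 'cV[R[i]]_g}) :
    exists q, forall i, lattice_point Pi (pow_map (D q) x i).
  have [q Fxq] := Fpres _ _ (sym_rel_perm x p).
  by exists q => i; rewrite ffunE apply_powBl -(apply_pow_perm F p); apply: Fxq.
have [q Dq0] := cover_by_kernels (cover_by_kernels_of_finitely_divisible
  (finitely_divisible_ffun (lattice_point_finitely_divisible hL)) cover).
have Fqp : forall i j, F (q i) j = F i (p^-1 j)%g.
  apply: apply_pow_inj => x i.
  apply/eqP; rewrite -subr_eq0 -apply_powBl.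
  by have /ffunP/(_ i) := Dq0 x; rewrite !ffunE => ->.
by exists q => i j; rewrite Fqp permK.
Qed.

Lemma equivariant_preserves_sym_rel F :
  is_endo_pow Pi F -> perm_equivariant F -> preserves_sym_rel F.
Proof.
move=> endoF Feq x y [p xy]; have [q Fqp] := Feq p; exists q => i; apply/torus_eqP.
rewrite -(apply_pow_intertwines _ _ Fqp) -apply_powB.
by apply: apply_pow_lattice => // j; apply: xy.
Qed.

Lemma equivariant_reflects_sym_rel F G : (0 < g)%N -> is_endo_pow Pi G ->
  comp_pow G F = @id_pow R g n -> perm_equivariant F -> reflects_sym_rel F.
Proof.
move=> g_gt0 endoG GF Feq x y [q Fxy]; have [p Fqp] := perm_equivariant_surj g_gt0 GF Feq q.
have Fz k : lattice_point Pi (apply_pow F (fun j => x (p j) - y j) k).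
  by rewrite apply_powB (apply_pow_intertwines _ _ Fqp); apply: Fxy.
exists p => i; apply/torus_eqP.
by have := apply_pow_lattice i endoG Fz; rewrite apply_pow_comp GF apply_pow_id.
Qed.

Lemma symmetric_condition_equivariant F : is_lattice Pi -> (0 < g)%N ->
  is_auto_pow Pi F -> symmetric_condition Pi F <-> perm_equivariant F.
Proof.
move=> hL g_gt0 [endoF [G [endoG [FG GF]]]].
split=> [/symmetric_condition_preserves | Feq].
  exact: preserves_sym_rel_equivariant.
apply: (symmetric_condition_of_sym_rel (G := G)) FG.
  exact: equivariant_preserves_sym_rel.
exact: equivariant_reflects_sym_rel GF Feq.
Qed.

End SymmetricProduct.

Section FixedPoints.
Variables (R : realType) (g n : nat).
Local Notation C := R[i].
Implicit Types (F G : 'I_n -> 'I_n -> 'M[C]_g) (p q : 'S_n).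

Definition blockmx F : 'M[C]_(\sum_(i < n) g) := \mxblock_(i, j) F i j.

Definition perm_pow q : 'I_n -> 'I_n -> 'M[C]_g := fun i j => if q i == j then 1%:M else 0.

Lemma blockmx_comp F G : blockmx (comp_pow F G) = blockmx F *m blockmx G.
Proof. by rewrite /blockmx mul_mxblock. Qed.

Lemma blockmx_id : blockmx (@id_pow R g n) = 1%:M.
Proof.
rewrite -(mxdiagZ (p_ := fun=> g)) /mxdiag /blockmx; apply: eq_mxblock => i j.
by rewrite /id_pow; case: eqP => // _; rewrite conform_mx_id.
Qed.

Lemma mxtrace_perm_pow q : \tr (blockmx (perm_pow q)) = (#|[set i | q i == i]| * g)%:R.
Proof.
rewrite mxtrace_mxblock /perm_pow (eq_bigr (fun i => if q i == i then g%:R else 0)).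
  by rewrite -big_mkcond /= sumr_const cardsE natrM mulr_natl.
by move=> i _; case: eqP => _; rewrite ?mxtrace1 ?mxtrace0.
Qed.

Lemma intertwines_perm_pow F q p : intertwines F q p ->
  comp_pow (perm_pow q) F = comp_pow F (perm_pow p).
Proof.
move=> Fqp; apply: functional_extensionality => i; apply: functional_extensionality => j.
rewrite /comp_pow /perm_pow [LHS](bigD1 (q i)) // [RHS](bigD1 (p^-1 j)%g) //= permKV !eqxx.
rewrite mul1mx mulmx1 -{1}(permKV p j) Fqp !big1 ?addr0 // => k.
- move=> kp; rewrite (_ : p k == j = false) ?mulmx0 //.
  by apply: contraNF kp => /eqP <-; rewrite permK.
- by rewrite eq_sym => /negbTE ->; rewrite mul0mx.
Qed.

Lemma intertwines_card_fixed F G q p : (0 < g)%N -> comp_pow F G = @id_pow R g n ->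
  intertwines F q p -> #|[set i | q i == i]| = #|[set i | p i == i]|.
Proof.
move=> g_gt0 FG Fqp; apply/eqP; rewrite -(eqn_pmul2r g_gt0) -(eqr_nat C).
rewrite -!mxtrace_perm_pow.
have FGb : blockmx F *m blockmx G = 1%:M by rewrite -blockmx_comp FG blockmx_id.
have GFb : blockmx G *m blockmx F = 1%:M by apply/mulmx1C.
rewrite -[blockmx (perm_pow q)]mulmx1 -FGb mulmxA -blockmx_comp (intertwines_perm_pow Fqp).
by rewrite blockmx_comp -mulmxA mxtrace_mulC -mulmxA GFb mulmx1.
Qed.

End FixedPoints.

Lemma moved_tperm (T : finType) (a b : T) : a != b ->
  ~: [set i | tperm a b i == i] = [set a; b].
Proof.
move=> ab; apply/setP => z; rewrite !inE.
case: tpermP => [->|->|/eqP az /eqP bz]; rewrite ?eqxx ?orbT //; first by rewrite eq_sym ab.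
by rewrite (negbTE az) (negbTE bz).
Qed.

Lemma moved_pair_tperm (T : finType) (q : {perm T}) x y :
  ~: [set i | q i == i] = [set x; y] -> q = tperm x y.
Proof.
move=> Mq; have moved z : (q z != z) = (z \in [set x; y]) by rewrite -Mq !inE.
have qxy z : z \in [set x; y] -> q z \in [set x; y] /\ q z != z.
  rewrite -moved => qz; split=> //; rewrite -moved.
  by apply: contra qz => /eqP/perm_inj ->.
apply/permP => z; case: tpermP => [->|->|/eqP zx /eqP zy].
- have [] := qxy x; rewrite !inE ?eqxx //.
  by case/orP=> /eqP ->; rewrite ?eqxx.
- have [] := qxy y; rewrite !inE ?eqxx ?orbT //.
  by case/orP=> /eqP ->; rewrite ?eqxx.
- by apply/eqP; rewrite -[_ == _]negbK moved !inE negb_or zx zy.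
Qed.

Section SwapPairs.
Variables (R : realType) (g n : nat) (F G : 'I_n -> 'I_n -> 'M[R[i]]_g) (a0 : 'I_n).
Hypotheses (g_gt0 : (0 < g)%N) (GF : comp_pow G F = @id_pow R g n).

Definition swap_pair b x y := x != y /\ intertwines F (tperm x y) (tperm a0 b).

Lemma swap_pairC b x y : swap_pair b x y -> swap_pair b y x.
Proof. by case=> xy Fxy; split; rewrite 1?eq_sym // tpermC. Qed.

Lemma swap_pair_col b x y : swap_pair b x y -> forall i, F i b = F (tperm x y i) a0.
Proof. by case=> _ Fxy i; rewrite -[in LHS](tpermK x y i) -(Fxy _ a0) tpermL. Qed.

Lemma swap_pair_row b x y : swap_pair b x y -> forall j, j != a0 -> j != b -> F x j = F y j.
Proof. by case=> _ Fxy j ja jb; rewrite -(Fxy x j) tpermL tpermD // eq_sym. Qed.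

Lemma swap_pair_col0 b x y : b != a0 -> swap_pair b x y -> F x a0 != F y a0.
Proof.
move=> ba sw; apply/eqP => Fxy; move/eqP: ba; apply.
apply: (left_inverse_col_inj g_gt0 GF) => i; rewrite (swap_pair_col sw).
by case: tpermP => [->|->|] //; rewrite Fxy.
Qed.

Lemma swap_pair_inj b e x y : b != a0 -> e != a0 ->
  swap_pair b x y -> swap_pair e x y -> b = e.
Proof.
move=> ba ea swb swe; apply/eqP; apply: contraNT (swap_pair_col0 ba swb) => be.
have := swap_pair_row swb ea; rewrite eq_sym => /(_ be).
by rewrite !(swap_pair_col swe) tpermL tpermR => ->.
Qed.

Lemma swap_pairs_meet b e x y x' y' : b != a0 -> e != a0 -> b != e ->
  swap_pair b x y -> swap_pair e x' y' -> [|| x == x', x == y', y == x' | y == y'].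
Proof.
move=> ba ea be swb swe; apply: contraNT (swap_pair_col0 ba swb).
rewrite !negb_or => /and4P[xx' xy' yx' yy'].
have := swap_pair_row swb ea; rewrite eq_sym => /(_ be).
rewrite !(swap_pair_col swe) (tpermD (x := x')) 1?eq_sym // (tpermD (x := x')) 1?eq_sym //.
by move=> ->.
Qed.

Lemma swap_pairs_col0 b e r u u' : b != a0 -> e != a0 -> b != e ->
  swap_pair b r u -> swap_pair e r u' -> F u a0 = F u' a0.
Proof.
move=> ba ea be swb swe.
have uu' : u != u'.
  apply: contra be => /eqP uu'; rewrite uu' in swb.
  by rewrite (swap_pair_inj ba ea swb swe).
have [ru _] := swb.
have := swap_pair_row swb ea; rewrite eq_sym => /(_ be).
by rewrite !(swap_pair_col swe) tpermL tpermD // eq_sym.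
Qed.

Hypothesis swap_pairs : forall b, b != a0 -> exists x y, swap_pair b x y.

Lemma swap_pairs_common_point b1 : b1 != a0 ->
  exists r, forall b, b != a0 -> exists u, swap_pair b r u.
Proof.
move=> b1a; have [x1 [y1 sw1]] := swap_pairs b1a.
have [[b2 [b2a b12]] | no_b2] := classic (exists b2, b2 != a0 /\ b1 != b2); last first.
  exists x1 => b ba; suff -> : b = b1 by exists y1.
  by apply: NNPP => bb1; apply: no_b2; exists b; split => //; apply/eqP => /esym.
have [x2 [y2 sw2]] := swap_pairs b2a.
have [r [u1 [u2 [swr1 swr2]]]] : exists r u1 u2, swap_pair b1 r u1 /\ swap_pair b2 r u2.
  have C1 := swap_pairC sw1; have C2 := swap_pairC sw2.
  case/or4P: (swap_pairs_meet b1a b2a b12 sw1 sw2) => /eqP E.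
  - by exists x1, y1, y2; split; last rewrite E.
  - by exists x1, y1, x2; split; last rewrite E.
  - by exists y1, x1, y2; split; last rewrite E.
  - by exists y1, x1, x2; split; last rewrite E.
exists r => b ba.
have [-> | bb1] := eqVneq b b1; first by exists u1.
have [-> | bb2] := eqVneq b b2; first by exists u2.
have [x [y sw]] := swap_pairs ba.
have [<- | xr] := eqVneq x r; first by exists y.
have [<- | yr] := eqVneq y r; first by exists x; apply: swap_pairC.
have u12 : u1 != u2.
  apply: contra b12 => /eqP u12; rewrite u12 in swr1.
  by rewrite (swap_pair_inj b1a b2a swr1 swr2).
have := swap_pairs_meet ba b1a bb1 sw swr1; have := swap_pairs_meet ba b2a bb2 sw swr2.
rewrite (negbTE xr) (negbTE yr) /= => /orP[] /eqP e2 /orP[] /eqP e1.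
- by move: u12; rewrite -e1 -e2 eqxx.
- by move: (swap_pair_col0 ba sw); rewrite e1 e2 (swap_pairs_col0 b1a b2a b12 swr1 swr2) eqxx.
- by move: (swap_pair_col0 ba sw); rewrite e1 e2 (swap_pairs_col0 b1a b2a b12 swr1 swr2) eqxx.
- by move: u12; rewrite -e1 -e2 eqxx.
Qed.

Lemma swap_pairs_shape b1 : b1 != a0 ->
  exists (s : 'S_n) (f h : 'M[R[i]]_g), forall i j, F i j = if s i == j then f else h.
Proof.
move=> b1a; have [r hr] := swap_pairs_common_point b1a.
have [u swu] : exists u : 'I_n -> 'I_n, forall b, b != a0 -> swap_pair b r (u b).
  apply: (fin_all_exists (P := fun b ub => b != a0 -> swap_pair b r ub)) => b.
  by have [-> | ba] := eqVneq b a0; [exists r | have [ub] := hr b ba; exists ub].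
have ur b : b != a0 -> u b != r by move=> ba; case: (swu b ba); rewrite eq_sym.
pose sigma b := if b == a0 then r else u b.
have sigma_inj : injective sigma.
  move=> b e; rewrite /sigma.
  have [-> | ba] := eqVneq b a0; have [-> | ea] := eqVneq e a0 => //.
  - by move=> re; move: (ur e ea); rewrite -re eqxx.
  - by move=> ure; move: (ur b ba); rewrite ure eqxx.
  by move=> ube; apply: (swap_pair_inj ba ea (swu b ba)); rewrite ube; apply: swu.
pose P := perm sigma_inj.
have col0 i : i != r -> F i a0 = F (u b1) a0.
  move=> ir; set e := (P^-1 i)%g.
  have Ei : i = sigma e by rewrite -permE permKV.
  have ea : e != a0 by apply: contraNneq ir => ea; rewrite Ei ea /sigma eqxx.
  rewrite Ei /sigma (negbTE ea); have [-> // | eb1] := eqVneq e b1.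
  exact: swap_pairs_col0 ea b1a eb1 (swu _ ea) (swu _ b1a).
exists P^-1%g, (F r a0), (F (u b1) a0) => i j.
have -> : (P^-1 i == j)%g = (i == sigma j) by rewrite (can2_eq (permKV P) (permK P)) permE.
rewrite /sigma; have [-> | ja] := eqVneq j a0.
  by have [-> // | ir] := eqVneq i r; apply: col0.
rewrite (swap_pair_col (swu j ja)); case: tpermP => [-> | -> | /eqP ir /eqP iu].
- by rewrite eq_sym (negbTE (ur j ja)); apply: col0; apply: ur.
- by rewrite eqxx.
- by rewrite (negbTE iu); apply: col0.
Qed.

End SwapPairs.

Lemma equivariant_swap_pairs (R : realType) (g n : nat) (F G : 'I_n -> 'I_n -> 'M[R[i]]_g)
    (a0 : 'I_n) :
  (0 < g)%N -> comp_pow F G = @id_pow R g n -> perm_equivariant F ->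
  forall b, b != a0 -> exists x y, swap_pair F a0 b x y.
Proof.
move=> g_gt0 FG Feq b ba; have [q Fq] := Feq (tperm a0 b).
have /cards2P[x [y [xy Mq]]] : #|~: [set i | q i == i]| == 2.
  rewrite cardsCs setCK (intertwines_card_fixed g_gt0 FG Fq).
  by rewrite -[[set i | _]]setCK -cardsCs moved_tperm 1?eq_sym // cards2 (eq_sym a0) ba.
by exists x, y; split=> //; rewrite -(moved_pair_tperm Mq).
Qed.

Lemma equivariant_shape (R : realType) (g n : nat) (F G : 'I_n -> 'I_n -> 'M[R[i]]_g) :
  (0 < g)%N -> (1 < n)%N -> comp_pow F G = @id_pow R g n -> comp_pow G F = @id_pow R g n ->
  perm_equivariant F ->
  exists (s : 'S_n) (f h : 'M[R[i]]_g), forall i j, F i j = if s i == j then f else h.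
Proof.
move=> g_gt0 n_gt1 FG GF Feq.
pose a0 : 'I_n := Ordinal (ltnW n_gt1); pose b1 : 'I_n := Ordinal n_gt1.
apply: (@swap_pairs_shape _ _ _ F G a0 g_gt0 GF _ b1) => //.
exact: equivariant_swap_pairs g_gt0 FG Feq.
Qed.

Lemma shape_equivariant (T : Type) n (s : 'S_n) (f h : T) (F : 'I_n -> 'I_n -> T) :
  (forall i j, F i j = if s i == j then f else h) -> perm_equivariant F.
Proof.
by move=> Fs p; exists (s * p * s^-1)%g => i j; rewrite !Fs !permM permKV (inj_eq perm_inj).
Qed.

Lemma shape_endo (R : realType) (g n : nat) (Pi : 'M[R[i]]_(g, g + g))
    (F : 'I_n -> 'I_n -> 'M[R[i]]_g) (s : 'S_n) (f h : 'M[R[i]]_g) :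
  is_endo_pow Pi F -> (1 < n)%N -> (forall i j, F i j = if s i == j then f else h) ->
  is_endo Pi f /\ is_endo Pi h.
Proof.
move=> endoF n_gt1 Fs.
pose i0 : 'I_n := Ordinal (ltnW n_gt1); pose i1 : 'I_n := Ordinal n_gt1.
have := endoF i0 (s i0); have := endoF i0 (s i1).
by rewrite !Fs eqxx (inj_eq perm_inj).
Qed.

Unset Implicit Arguments.

Theorem theorem1p4 (R : realType) (g : nat) (Pi : 'M[R[i]]_(g, g + g))
  (n : nat) (F : 'I_n -> 'I_n -> 'M[R[i]]_g) :
  simple_abelian_variety Pi -> (2 <= n)%N -> is_auto_pow Pi F ->
  (symmetric_condition Pi F <->
   exists (s : 'S_n) (f h : 'M[R[i]]_g),
     is_endo Pi f /\ is_endo Pi h /\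
     forall i j, F i j = if s i == j then f else h).
Proof.
move=> [[hL _] [g_gt0 _]] n_gt1 autoF; rewrite symmetric_condition_equivariant //.
have [endoF [G [_ [FG GF]]]] := autoF.
split=> [Feq | [s [f [h [_ [_ Fs]]]]]]; last exact: shape_equivariant Fs.
have [s [f [h Fs]]] := equivariant_shape g_gt0 n_gt1 FG GF Feq.
by exists s, f, h; have [endof endoh] := shape_endo endoF n_gt1 Fs.
Qed.
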